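(* Let $L,L'$ be links and suppose $W:\mathrm{HY}(L)\to\mathrm{HY}(L')$ is a grading-preserving linear map that commutes with the action of $\mathcal{F}_k$ for all $k\ge1$. Then $W$ commutes with the action of the involution $\Phi$ and of the dual operators $\mathcal{E}_k=\Phi\mathcal{F}_k\Phi$.
   Context: $\mathrm{HY}(L)$ is the (triply graded, with gradings written $\mathrm{HY}^i_{a,b}$) $y$-ified Khovanov–Rozansky homology of Gorsky–Hogancamp. $\mathcal F_k$ ($k\ge1$) are the tautological operators of Gorsky–Hogancamp–Mellit, and $\mathcal F_1$ satisfies the curious hard Lefschetz property: $\mathcal F_1^j:\mathrm{HY}^i_{-2j,k}\to\mathrm{HY}^i_{2j,k+2j}$ is an isomorphism for all $i,k$ and $j\ge0$. A nonzero $v\in\mathrm{HY}^i_{-2j,k}$ with $j\ge0$ and $\mathcal F_1^{j+1}v=0$ is a highest weight vector; $\mathrm{HY}$ has a basis of vectors $\mathcal F_1^sv$ with $v$ highest weight and $s\le j$. The operator $\mathcal E_1$ is defined by $\mathcal E_1(\mathcal F_1^sv)=0$ if $s=0$ and $s(j-s+1)\mathcal F_1^{s-1}v$ if $s>0$; the involution $\Phi$ by $\Phi(\mathcal F_1^sv)=\frac{1}{(j-s)\cdots(s+1)}\mathcal F_1^{j-s}v$ if $j-2s>0$, $\mathcal F_1^sv$ if $j=2s$, $s\cdots(j-s+1)\mathcal F_1^{j-s}v$ if $j-2s<0$. $\mathcal E_k=\Phi\mathcal F_k\Phi$. *)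

(* Abstract model of y-ified KhR homology HY(L) with its
   tautological operators F_k. *)
From HB Require Import structures.
From mathcomp Require Import all_boot all_order all_algebra.
Set Implicit Arguments. Unset Strict Implicit. Unset Printing Implicit Defensive.
Import Order.TTheory GRing.Theory Num.Theory.
Local Open Scope ring_scope.

Section HY.
Variable K : fieldType.
Variable V : lmodType K.

(* deg i a b x  <->  x is homogeneous of degree HY^i_{a,b} *)
Definition graded_space (deg : int -> int -> int -> V -> bool) : Prop :=
  (forall i a b, deg i a b 0 /\
     (forall x y, deg i a b x -> deg i a b y -> deg i a b (x + y)) /\
     (forall (c : K) x, deg i a b x -> deg i a b (c *: x))) /\
  (forall x : V, exists (r : seq (int * int * int)) (f : int * int * int -> V),
      uniq r /\ (forall t, t \in r -> deg t.1.1 t.1.2 t.2 (f t)) /\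
      x = \sum_(t <- r) f t) /\
  (forall (r : seq (int * int * int)) (f : int * int * int -> V),
      uniq r -> (forall t, t \in r -> deg t.1.1 t.1.2 t.2 (f t)) ->
      \sum_(t <- r) f t = 0 -> forall t, t \in r -> f t = 0).

Definition curious_hard_lefschetz (deg : int -> int -> int -> V -> bool)
    (F1 : V -> V) : Prop :=
  forall (i k : int) (j : nat),
    let src := deg i (- (Posz (2 * j))) k in
    let tgt := deg i (Posz (2 * j)) (k + Posz (2 * j)) in
    (forall x, src x -> tgt (iter j F1 x)) /\
    (forall x y, src x -> src y -> iter j F1 x = iter j F1 y -> x = y) /\
    (forall y, tgt y -> exists2 x, src x & iter j F1 x = y).

Definition highest_weight (deg : int -> int -> int -> V -> bool)
    (F1 : V -> V) (j : nat) (v : V) : Prop :=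
  v != 0 /\ (exists i k : int, deg i (- (Posz (2 * j))) k v) /\
  iter j.+1 F1 v = 0.

Definition lefschetz_spanned (deg : int -> int -> int -> V -> bool)
    (F1 : V -> V) : Prop :=
  forall x : V, exists r : seq (nat * nat * V),
    (forall t, t \in r -> highest_weight deg F1 t.1.1 t.2 /\ (t.1.2 <= t.1.1)%N) /\
    x = \sum_(t <- r) iter t.1.2 F1 t.2.

Definition HY_structure (deg : int -> int -> int -> V -> bool)
    (F : nat -> {linear V -> V}) : Prop :=
  graded_space deg /\ curious_hard_lefschetz deg (F 1%N) /\
  lefschetz_spanned deg (F 1%N).

End HY.

Definition phi_coef (K : fieldType) (j s : nat) : K :=
  if (j - 2 * s > 0)%N then (\prod_(s.+1 <= m < (j - s).+1) (m%:R : K))^-1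
  else if j == (2 * s)%N then 1
  else \prod_((j - s).+1 <= m < s.+1) (m%:R : K).

Definition is_Phi (K : fieldType) (V : lmodType K)
    (deg : int -> int -> int -> V -> bool) (F1 : V -> V) (Phi : V -> V) : Prop :=
  forall (j s : nat) (v : V), highest_weight deg F1 j v -> (s <= j)%N ->
    Phi (iter s F1 v) = phi_coef K j s *: iter (j - s) F1 v.

(* Phi is defined string by string: on F1^s v, for v highest weight of
   weight j, it is a fixed scalar multiple of F1^(j-s) v.  A graded map W
   commuting with F1 sends a highest weight vector of weight j either to 0 or
   to a highest weight vector of the same weight j, so it sends each string to
   a string with the same coefficients and commutes with Phi on it.  Since the
   strings span HY, W commutes with Phi, hence also with E_k = Phi F_k Phi. *)
From HB Require Import structures.
From mathcomp Require Import all_boot all_order all_algebra.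
Set Implicit Arguments. Unset Strict Implicit. Unset Printing Implicit Defensive.
Import GRing.Theory.
Local Open Scope ring_scope.

Lemma iter_morph (T U : Type) (h : T -> U) (f : T -> T) (g : U -> U) n :
  {morph h : x / f x >-> g x} -> {morph h : x / iter n f x >-> iter n g x}.
Proof. by move=> hf x; elim: n => //= n IHn; rewrite hf IHn. Qed.

Section LefschetzMorphism.

Variables (K : fieldType) (V V' : lmodType K).
Variables (deg : int -> int -> int -> V -> bool)
          (deg' : int -> int -> int -> V' -> bool).
Variables (F1 : V -> V) (F1' : {linear V' -> V'}) (W : {linear V -> V'}).
Hypothesis Wgr : forall i a b x, deg i a b x -> deg' i a b (W x).
Hypothesis WF1 : {morph W : x / F1 x >-> F1' x}.

Lemma highest_weight_map j v :
  highest_weight deg F1 j v -> W v != 0 -> highest_weight deg' F1' j (W v).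
Proof.
case=> _ [[i [k deg_v]] F1v0] Wv_neq0; split=> //; split.
  by exists i, k; apply: Wgr.
by rewrite -(iter_morph _ WF1) F1v0 linear0.
Qed.

Lemma Phi_morph_string (Phi : V -> V) (Phi' : {linear V' -> V'}) j s v :
    is_Phi deg F1 Phi -> is_Phi deg' F1' Phi' ->
    highest_weight deg F1 j v -> (s <= j)%N ->
  W (Phi (iter s F1 v)) = Phi' (W (iter s F1 v)).
Proof.
move=> PhiE PhiE' hw_v le_sj.
rewrite (PhiE j) // linearZ /= !(iter_morph _ WF1).
have [-> | Wv_neq0] := eqVneq (W v) 0.
  by rewrite !iter_fix ?linear0 ?scaler0.
by rewrite (PhiE' j) //; apply: highest_weight_map.
Qed.

Lemma Phi_morph (Phi : {linear V -> V}) (Phi' : {linear V' -> V'}) :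
    lefschetz_spanned deg F1 -> is_Phi deg F1 Phi -> is_Phi deg' F1' Phi' ->
  {morph W : x / Phi x >-> Phi' x}.
Proof.
move=> spanned PhiE PhiE' x; have [r [hw_r ->]] := spanned x.
rewrite !linear_sum; apply: eq_big_seq => t /hw_r[hw_t le_t].
exact: Phi_morph_string hw_t le_t.
Qed.

End LefschetzMorphism.

Theorem corollary2p9 (K : fieldType) (charK0 : [pchar K] =i pred0)
  (V V' : lmodType K)
  (deg : int -> int -> int -> V -> bool) (deg' : int -> int -> int -> V' -> bool)
  (F : nat -> {linear V -> V}) (F' : nat -> {linear V' -> V'})
  (HV : HY_structure deg F) (HV' : HY_structure deg' F')
  (Phi : {linear V -> V}) (Phi' : {linear V' -> V'})
  (HPhi : is_Phi deg (F 1%N) Phi) (HPhi' : is_Phi deg' (F' 1%N) Phi')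
  (W : {linear V -> V'})
  (Wgr : forall (i a b : int) (x : V), deg i a b x -> deg' i a b (W x))
  (WF : forall (k : nat), (1 <= k)%N -> forall x : V, W (F k x) = F' k (W x)) :
  (forall x : V, W (Phi x) = Phi' (W x)) /\
  (forall (k : nat), (1 <= k)%N ->
     forall x : V, W (Phi (F k (Phi x))) = Phi' (F' k (Phi' (W x)))).
Proof.
case: HV => _ [_ spanned].
have WPhi := Phi_morph Wgr (WF 1%N isT) spanned HPhi HPhi'.
by split=> // k k_gt0 x; rewrite WPhi WF // WPhi.
Qed.
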